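(* Let $(G,v)$ be a Hamel space over an ordered field $C$ and $G_0\subseteq G$ a $C$-linear subspace. For any $c_1,\dots,c_m\in G\setminus G_0$, \[\#\Big(v\big(G_0+\textstyle\sum_{i=1}^mCc_i\big)\setminus v(G_0)\Big)\le m.\] In particular, there are $n\le m$ and distinct $d_1,\dots,d_n\in v(G_0+\sum_{i=1}^mCc_i)\setminus v(G_0)$ such that $v(G_0+\sum_{i=1}^mCc_i)\subseteq v(G_0)\cup\{d_1,\dots,d_n\}$.
   Context: Let $C$ be an ordered field. A $2$-ordered $C$-vector space is a $C$-vector space $G$ with two total orderings $<_0,<_1$ such that $G$ is an ordered $C$-vector space with respect to each. Put $G_\infty=G\cup\{\infty\}$, with $G<_0\infty$, $G<_1\infty$. A Hamel valuation on $G$ is a map $v:G\to G_\infty$ such that for all $x,y\in G$ and $\lambda\in C^{\times}$: $v(x)=\infty$ iff $x=0$; $v(x+y)\ge_0\min_0(v(x),v(y))$; $v(\lambda x)=v(x)$; if $0<_1x<_1y$ then $v(x)\ge_0v(y)$; $v(v(x))=v(x)$ (with $v(\infty)=\infty$); and $v(x)>_10$. A Hamel space is such a pair $(G,v)$. *)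

From HB Require Import structures.
From mathcomp Require Import all_boot all_order all_algebra.
Set Implicit Arguments. Unset Strict Implicit. Unset Printing Implicit Defensive.
Import Order.TTheory GRing.Theory Num.Theory.
Local Open Scope ring_scope.

Section HamelDefs.
Variables (C : realFieldType) (G : lmodType C).

Definition total_order (le : rel G) : Prop :=
  [/\ reflexive le, antisymmetric le, transitive le & total le].

Definition ordered_vspace (le : rel G) : Prop :=
  [/\ total_order le,
      (forall x y z : G, le x y -> le (x + z) (y + z)) &
      (forall (a : C) (x : G), 0 < a -> le 0 x -> le 0 (a *: x))].

Definition ltof (le : rel G) (x y : G) : bool := (x != y) && le x y.

(** G_oo = option G, with None = oo, greater than every element of G *)
Definition le_inf (le : rel G) (a b : option G) : bool :=
  match b with
  | None => true
  | Some y => match a with None => false | Some x => le x y end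
  end.

Definition lt_inf (le : rel G) (a b : option G) : bool :=
  (a != b) && le_inf le a b.

Definition min_inf (le : rel G) (a b : option G) : option G :=
  if le_inf le a b then a else b.

Definition v_inf (v : G -> option G) (a : option G) : option G :=
  match a with None => None | Some g => v g end.

Definition hamel_valuation (le0 le1 : rel G) (v : G -> option G) : Prop :=
  (forall x, v x = None <-> x = 0) /\
  [/\ (forall x y, le_inf le0 (min_inf le0 (v x) (v y)) (v (x + y))),
      (forall (lam : C) x, lam != 0 -> v (lam *: x) = v x),
      (forall x y, ltof le1 0 x -> ltof le1 x y -> le_inf le0 (v y) (v x)),
      (forall x, v_inf v (v x) = v x) &
      (forall x, lt_inf le1 (Some 0) (v x))].

Definition subspace (G0 : G -> Prop) : Prop :=
  [/\ G0 0, (forall x y, G0 x -> G0 y -> G0 (x + y)) &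
      (forall (a : C) x, G0 x -> G0 (a *: x))].

Definition in_span_ext (G0 : G -> Prop) (m : nat) (c : 'I_m -> G) (x : G) : Prop :=
  exists g0, exists lam : 'I_m -> C, G0 g0 /\ x = g0 + \sum_(i < m) lam i *: c i.

Definition vimage (v : G -> option G) (S : G -> Prop) (d : option G) : Prop :=
  exists x, S x /\ v x = d.

End HamelDefs.

From HB Require Import structures.
From mathcomp Require Import all_boot all_order all_algebra.
From Stdlib Require Import ClassicalEpsilon.
Set Implicit Arguments. Unset Strict Implicit. Unset Printing Implicit Defensive.
Import Order.TTheory GRing.Theory Num.Theory.
Local Open Scope ring_scope.

(** Adjoin the c_i one at a time. Inside G0 + C c all values outside v(G0) coincide:
    if x = g + a c and y = g' + b c have new values, then b x - a y lies in G0, and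
    by the strict ultrametric inequality v(b x) = v(a y), i.e. v x = v y. So each
    c_i contributes at most one new value. Only the ultrametric inequality, scale
    invariance of v and totality of <_0 are used. *)

Lemma uniq_sub_cover (T : eqType) (P : T -> Prop) (s : seq T) :
  exists ds : seq T, [/\ (size ds <= size s)%N, uniq ds,
    (forall d, d \in ds -> P d) & (forall d, d \in s -> P d -> d \in ds)].
Proof.
pose p d : bool := if excluded_middle_informative (P d) then true else false.
have pP d : reflect (P d) (p d).
  by rewrite /p; case: excluded_middle_informative => ?; constructor.
exists [seq d <- undup s | p d]; split.
- by rewrite size_filter (leq_trans (count_size _ _)) ?size_undup.
- by rewrite filter_uniq ?undup_uniq.
- by move=> d; rewrite mem_filter => /andP[/pP].
- by move=> d sd Pd; rewrite mem_filter mem_undup sd andbT; apply/pP.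
Qed.

Section NewValues.
Variables (C : realFieldType) (G : lmodType C) (le : rel G) (v : G -> option G).
Hypothesis le_total_order : total_order le.
Hypothesis v_ultra : forall x y, le_inf le (min_inf le (v x) (v y)) (v (x + y)).
Hypothesis v_scale : forall (a : C) x, a != 0 -> v (a *: x) = v x.

Lemma le_inf_anti a b : le_inf le a b -> le_inf le b a -> a = b.
Proof.
have [_ anti _ _] := le_total_order.
by case: a b => [x|] [y|] //= xy yx; rewrite (anti x y) ?xy.
Qed.

Lemma le_inf_total a b : le_inf le a b || le_inf le b a.
Proof. by have [_ _ _ tot] := le_total_order; case: a b => [x|] [y|] //=; apply: tot. Qed.

Lemma v_opp x : v (- x) = v x.
Proof. by rewrite -scaleN1r v_scale ?oppr_eq0 ?oner_eq0. Qed.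

Lemma v_addr_neq x y : v x <> v y -> v (x + y) = v x \/ v (x + y) = v y.
Proof.
wlog xy : x y / le_inf le (v x) (v y) => [hwlog neq|neq].
  case/orP: (le_inf_total (v x) (v y)) => [xy|yx]; first exact: hwlog.
  by rewrite addrC; case: (hwlog y x yx) => //; auto.
have le_sum : le_inf le (v x) (v (x + y)) by have := v_ultra x y; rewrite /min_inf xy.
have := v_ultra (x + y) (- y); rewrite addrK v_opp /min_inf.
case: ifP => [_ sum_x | _ yx]; first by left; apply: le_inf_anti.
by case: neq; apply: le_inf_anti.
Qed.

Definition add_line (H : G -> Prop) (c : G) (x : G) : Prop :=
  exists h, exists a : C, H h /\ x = h + a *: c.

Lemma subspace_add_line H c : subspace H -> subspace (add_line H c).
Proof.
case=> H0 HD HZ; split.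
- by exists 0, 0; rewrite scale0r addr0.
- move=> _ _ [h [a [Hh ->]]] [h' [b [Hh' ->]]].
  by exists (h + h'), (a + b); rewrite scalerDl addrACA; split; first exact: HD.
- move=> a _ [h [b [Hh ->]]].
  by exists (a *: h), (a * b); rewrite scalerDr scalerA; split; first exact: HZ.
Qed.

Lemma add_line_new_value_eq H c x y : subspace H ->
  add_line H c x -> add_line H c y ->
  ~ vimage v H (v x) -> ~ vimage v H (v y) -> v x = v y.
Proof.
case=> _ HD HZ [h [a [Hh ex]]] [h' [b [Hh' ey]]] newx newy.
have [a0|a_neq0] := eqVneq a 0.
  by case: newx; exists h; rewrite ex a0 scale0r addr0.
have [b0|b_neq0] := eqVneq b 0.
  by case: newy; exists h'; rewrite ey b0 scale0r addr0.
pose z := b *: h + (- a) *: h'.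
have Hz : H z by apply: HD; apply: HZ.
have bx : b *: x = z + a *: y.
  by rewrite ex ey /z !scalerDr !scalerA mulrC scaleNr addrA subrK.
have vbx : v (b *: x) = v x by exact: v_scale.
have vay : v (a *: y) = v y by exact: v_scale.
have [vz|vz] := eqVneq (v z) (v (a *: y)).
  by case: newy; exists z; rewrite vz vay.
have := v_addr_neq (elimN eqP vz); rewrite -bx vbx vay => -[vxz|//].
by case: newx; exists z.
Qed.

Lemma in_span_ext0 H (c : 'I_0 -> G) x : in_span_ext H c x -> H x.
Proof. by case=> g [lam [Hg ->]]; rewrite big_ord0 addr0. Qed.

Lemma in_span_extS H n (c : 'I_n.+1 -> G) x : in_span_ext H c x ->
  in_span_ext (add_line H (c ord0)) (fun i => c (lift ord0 i)) x.
Proof.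
case=> g [lam [Hg ->]]; exists (g + lam ord0 *: c ord0), (fun i => lam (lift ord0 i)).
by rewrite big_ord_recl addrA; split; first by exists g, (lam ord0).
Qed.

Lemma new_values_in_span_ext n H (c : 'I_n -> G) : subspace H ->
  exists s : seq (option G), (size s <= n)%N /\
    forall d, vimage v (in_span_ext H c) d -> ~ vimage v H d -> d \in s.
Proof.
elim: n H c => [|n IHn] H c sH.
  by exists [::]; split => // d [x [/in_span_ext0 Hx <-]] []; exists x.
have [s [size_s cover_s]] := IHn _ (fun i => c (lift ord0 i)) (subspace_add_line (c ord0) sH).
have [[x0 [line_x0 new_x0]] | no_new] :=
  classic (exists x0, add_line H (c ord0) x0 /\ ~ vimage v H (v x0)).
- exists (v x0 :: s); split => // _ [x [/in_span_extS span_x <-]] new_x.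
  have [[y [line_y vy]] | not_line] := classic (vimage v (add_line H (c ord0)) (v x)).
    by rewrite -vy (add_line_new_value_eq sH line_y line_x0) ?vy ?mem_head.
  by rewrite in_cons cover_s ?orbT //; exists x.
- exists s; split => [|_ [x [/in_span_extS span_x <-]] new_x]; first exact: leqW.
  apply: cover_s => [|[y [line_y vy]]]; first by exists x.
  by apply: no_new; exists y; rewrite vy.
Qed.

End NewValues.

Theorem proposition4p4 (C : realFieldType) (G : lmodType C)
  (le0 le1 : rel G) (v : G -> option G)
  (hord0 : ordered_vspace le0) (hord1 : ordered_vspace le1)
  (hv : hamel_valuation le0 le1 v)
  (G0 : G -> Prop) (hG0 : subspace G0)
  (m : nat) (c : 'I_m -> G) (hc : forall i, ~ G0 (c i)) :
  (* #( v(G0 + sum C c_i) \ v(G0) ) <= m *)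
  (exists s : seq (option G), (size s <= m)%N /\
     forall d, vimage v (in_span_ext G0 c) d -> ~ vimage v G0 d -> d \in s)
  /\
  (* n <= m distinct d_1..d_n in the difference covering v(G0 + sum C c_i) *)
  (exists ds : seq (option G),
     [/\ (size ds <= m)%N, uniq ds,
         (forall d, d \in ds -> vimage v (in_span_ext G0 c) d /\ ~ vimage v G0 d) &
         (forall d, vimage v (in_span_ext G0 c) d -> vimage v G0 d \/ d \in ds)]).
Proof.
have [[le0_total _ _] [_ [v_ultra v_scale _ _ _]]] := (hord0, hv).
have [s [size_s cover_s]] := new_values_in_span_ext le0_total v_ultra v_scale c hG0.
split; first by exists s.
have [ds [size_ds uniq_ds new_ds cover_ds]] := uniq_sub_cover
  (fun d => vimage v (in_span_ext G0 c) d /\ ~ vimage v G0 d) s.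
exists ds; split; rewrite ?(leq_trans size_ds) //.
move=> d span_d; have [|old_d] := classic (vimage v G0 d); first by left.
by right; apply: cover_ds; [apply: cover_s | split].
Qed.
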